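(* Let $(A,+,\circ)$ be a finite left brace with cyclic additive group, let $g$ be an element of a transitive cycle base of $A$, and let $(A,\bullet)$ be the cycle set given by $a\bullet b:=\lambda_a(g)^{-}\circ b$. Let $H$ be the subgroup of $(A,\circ)$ such that $\mathrm{Ret}(A,\bullet)=A/H$ (namely $H=\{h\in A\mid\lambda_h(g)=g\}$). Then $H=\mathrm{Soc}(A)$.
   Context: A left brace is a set $A$ with two operations such that $(A,+)$ is an abelian group, $(A,\circ)$ is a group, and $a\circ(b+c)=a\circ b-a+a\circ c$. $\lambda_a(b):=-a+a\circ b$; $a\mapsto\lambda_a$ is a homomorphism $(A,\circ)\to\mathrm{Aut}(A,+)$. $a^{-}$ is the inverse of $a$ in $(A,\circ)$. $\mathrm{Soc}(A):=\{a\mid\lambda_a=\mathrm{id}_A\}$. A transitive cycle base is a single $\lambda$-orbit generating $(A,+)$. For a cycle set (left multiplications $\sigma_x$ bijective, $(x\cdot y)\cdot(x\cdot z)=(y\cdot x)\cdot(y\cdot z)$), $\mathrm{Ret}(X)$ is the quotient by $x\sim y\iff\sigma_x=\sigma_y$; for $(A,\bullet)$ its classes are the left cosets $a\circ H$. *)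

From HB Require Import structures.
From mathcomp Require Import all_boot all_order all_algebra.
Set Implicit Arguments. Unset Strict Implicit. Unset Printing Implicit Defensive.
Import GRing.Theory.
Local Open Scope ring_scope.

Definition is_left_brace (T : finZmodType) (circ : T -> T -> T) (e : T)
  (cinv : T -> T) : Prop :=
  [/\ (forall a b c, circ a (circ b c) = circ (circ a b) c),
      (forall a, circ e a = a /\ circ a e = a),
      (forall a, circ (cinv a) a = e /\ circ a (cinv a) = e)
    & (forall a b c, circ a (b + c) = circ a b - a + circ a c)].

Definition blambda (T : finZmodType) (circ : T -> T -> T) (a b : T) : T :=
  - a + circ a b.

Definition add_cyclic (T : finZmodType) : Prop :=
  exists g0 : T, forall x : T, exists n : nat, x = g0 *+ n.

Definition orbit_generates (T : finZmodType) (circ : T -> T -> T) (g : T) : Prop :=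
  forall x : T, exists c : T -> int,
    x = \sum_(a : T) (blambda circ a g) *~ c a.

(* g belongs to a transitive cycle base: the single lambda-orbit containing g
   generates (A,+) *)
Definition in_transitive_cycle_base (T : finZmodType) (circ : T -> T -> T)
  (g : T) : Prop := orbit_generates circ g.

Definition cycle_op (T : finZmodType) (circ : T -> T -> T) (cinv : T -> T)
  (g : T) (a b : T) : T := circ (cinv (blambda circ a g)) b.

Definition retH (T : finZmodType) (circ : T -> T -> T) (g : T) : {set T} :=
  [set h | blambda circ h g == g].

Definition bsoc (T : finZmodType) (circ : T -> T -> T) : {set T} :=
  [set a | [forall b, blambda circ a b == b]].

(* The maps lambda_a are endomorphisms of the cyclic group (A,+), hence
   multiplications by integers, so they all commute.  If lambda_h fixes g, it
   therefore fixes every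
     lambda_a(g) = lambda_a(lambda_h(g)) = lambda_h(lambda_a(g)),
   and since these elements generate (A,+), lambda_h is the identity. *)
From HB Require Import structures.
From mathcomp Require Import all_boot all_order all_algebra.
Set Implicit Arguments.
Unset Strict Implicit.
Unset Printing Implicit Defensive.

Import GRing.Theory.
Local Open Scope ring_scope.

Section CyclicEndomorphisms.
Variables (T : zmodType) (g0 : T).
Hypothesis g0_gen : forall x : T, exists n : nat, x = g0 *+ n.

Lemma cyclic_additive_mulrn (f : {additive T -> T}) :
  exists k : nat, forall x, f x = x *+ k.
Proof.
have [k fg0] := g0_gen (f g0); exists k => x.
by have [n ->] := g0_gen x; rewrite raddfMn fg0 mulrnAC.
Qed.

Lemma cyclic_additive_comm (f h : {additive T -> T}) x : f (h x) = h (f x).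
Proof.
have [[k fk] [l hl]] := (cyclic_additive_mulrn f, cyclic_additive_mulrn h).
by rewrite fk hl fk hl mulrnAC.
Qed.

End CyclicEndomorphisms.

Section BraceLambda.
Variables (T : finZmodType) (circ : T -> T -> T).
Hypothesis circ_addr : forall a b c, circ a (b + c) = circ a b - a + circ a c.

Lemma blambdaD a : {morph blambda circ a : x y / x + y}.
Proof. by move=> x y; rewrite /blambda circ_addr -!addrA. Qed.

Lemma blambda0 a : blambda circ a 0 = 0.
Proof. by apply: (addrI (blambda circ a 0)); rewrite -blambdaD !addr0. Qed.

HB.instance Definition _ a :=
  GRing.isNmodMorphism.Build T T (blambda circ a) (blambda0 a, blambdaD a).

Lemma retH_sub_bsoc (g : T) :
  add_cyclic T -> orbit_generates circ g -> retH circ g \subset bsoc circ.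
Proof.
move=> [g0 g0_gen] orbit_gen; apply/subsetP => h; rewrite !inE => /eqP hg.
apply/forallP => x; apply/eqP; have [c ->] := orbit_gen x.
rewrite raddf_sum; apply: eq_bigr => a _.
rewrite raddfMz -[in RHS]hg; congr (_ *~ _).
exact: cyclic_additive_comm g0_gen _ _ _.
Qed.

End BraceLambda.

Lemma bsoc_sub_retH (T : finZmodType) (circ : T -> T -> T) (g : T) :
  bsoc circ \subset retH circ g.
Proof. by apply/subsetP => h; rewrite !inE => /forallP. Qed.

Theorem mainTheorem3 (T : finZmodType) (circ : T -> T -> T) (e : T)
  (cinv : T -> T) (g : T) :
  is_left_brace circ e cinv ->
  add_cyclic T ->
  in_transitive_cycle_base circ g ->
  retH circ g = bsoc circ.
Proof.
case=> _ _ _ circ_addr cyclicT orbit_gen.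
apply/eqP; rewrite eqEsubset bsoc_sub_retH andbT.
exact: retH_sub_bsoc.
Qed.
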